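(* Let $N$ and $M$ be large positive parameters, let $\mathcal{X}$ be any subset of $\{1,2,\ldots,10^M\}$, and let $\Delta=\Delta(N)$ be any function with $\Delta\to\infty$. If $M|\mathcal{X}|\Delta^2\le \pi(N)\log M$, then for $\pi(N)\bigl(1+O(1/\Delta)\bigr)$ primes $p\le N$ we have $$\#\{x \bmod p \;:\; x\in\mathcal{X}\}=|\mathcal{X}|\bigl(1+O(\Delta^{-1})\bigr).$$
   Context: $\pi(N)$ denotes the number of primes $p\le N$. $\#\{x \bmod p : x\in\mathcal{X}\}$ is the number of distinct residues modulo $p$ of elements of $\mathcal{X}$. *)

From mathcomp Require Import all_boot.
From Stdlib Require Import Reals.

Definition prime_pi (N : nat) : nat := count prime (iota 0 N.+1).

Definition nres (X : seq nat) (p : nat) : nat := size (undup [seq x %% p | x <- X]).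

(* Modulo a prime p, X loses at most as many residues as there are pairs {x, y} in X
   with p | x - y. As 0 < |x - y| < 10^M, each pair is counted by at most
   log_T 10^M <= 8 M / ln M primes p >= T := floor(sqrt M) + 1, so over these primes
   there are at most 8 |X|^2 M / ln M such pairs in total. By Markov's inequality at
   most 8 Delta |X| M / ln M <= 8 pi(N) / Delta of them lose more than |X| / Delta
   residues, while the primes below T number at most sqrt M + 1 <= 4 pi(N) / Delta. *)

From mathcomp Require Import all_boot zify.
From Stdlib Require Import Reals Lra.

Fixpoint ncongr_pairs (p : nat) (s : seq nat) : nat :=
  if s is x :: s' then count (fun y => x == y %[mod p]) s' + ncongr_pairs p s'
  else 0.

Lemma nres_le_size X p : nres X p <= size X.
Proof. by rewrite /nres (leq_trans (size_undup _)) ?size_map. Qed.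

Lemma size_le_nres_add_pairs X p : size X <= nres X p + ncongr_pairs p X.
Proof.
rewrite /nres; elim: X => [|x s IH] //=.
case: ifP => [/mapP [y ys /eqP xy] | _] /=.
- by rewrite addnCA -add1n leq_add // -has_count; apply/hasP; exists y.
- by rewrite addSn ltnS (leq_trans IH) // leq_add2l leq_addl.
Qed.

Lemma prod_primes_dvdn d (Q : seq nat) :
  uniq Q -> all prime Q -> all (dvdn^~ d) Q -> \prod_(p <- Q) p %| d.
Proof.
elim: Q => [|q Q IH] /=; first by rewrite big_nil dvd1n.
move=> /andP [qQ uQ] /andP [pq pQ] /andP [dq dQ].
rewrite big_cons Gauss_dvd ?dq ?IH // prime_coprime // Euclid_dvd_prod // big_has.
apply/hasPn => r rQ /=; rewrite dvdn_prime2 //; last exact: (allP pQ).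
by apply: contraNneq qQ => ->.
Qed.

Lemma count_large_prime_dvdn T d (Q : seq nat) :
  1 < T -> 0 < d -> uniq Q -> all prime Q -> all (leq T) Q ->
  count (dvdn^~ d) Q <= trunc_log T d.
Proof.
move=> T1 d0 uQ pQ TQ; apply: trunc_log_max => //; rewrite -size_filter.
set Qd := filter _ Q.
have QdQ : {subset Qd <= Q} by move=> p; rewrite mem_filter => /andP [].
apply: (@leq_trans (\prod_(p <- Qd) p)).
  have -> : expn T (size Qd) = \prod_(p <- Qd) T.
    by rewrite big_const_seq count_predT -Monoid.iteropE.
  rewrite big_seq [leqRHS]big_seq; apply: leq_prod => p /QdQ; exact: (allP TQ).
apply: dvdn_leq d0 (prod_primes_dvdn _ _ _ _ _).
- exact: filter_uniq.
- by apply/allP => p /QdQ; apply: (allP pQ).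
- exact: filter_all.
Qed.

Section LargePrimes.

Variables (T : nat) (Q : seq nat).
Hypotheses (T_gt1 : 1 < T) (Q_uniq : uniq Q) (Q_prime : all prime Q)
  (Q_large : all (leq T) Q).

Lemma count_large_prime_congr B x y : x != y -> x <= B -> y <= B ->
  count (fun p => x == y %[mod p]) Q <= trunc_log T B.
Proof.
move=> neq_xy xB yB; wlog lt_yx : x y neq_xy xB yB / y < x.
  move=> hwlog; case: (ltngtP x y) neq_xy => // [lt_xy | lt_yx] _.
  - rewrite (eq_count (fun p => eq_sym _ _)).
    by apply: hwlog; rewrite // neq_ltn lt_xy orbT.
  - by apply: hwlog; rewrite // neq_ltn lt_yx orbT.
rewrite (eq_count (fun p => eqn_mod_dvd p (ltnW lt_yx))).
apply: leq_trans (count_large_prime_dvdn _ _ _ T_gt1 _ Q_uniq Q_prime Q_large) _.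
  by rewrite subn_gt0.
by apply: leq_trunc_log; rewrite leq_subLR (leq_trans xB) ?leq_addl.
Qed.

Lemma sum_pairs_large_primes B X : uniq X -> all (leq^~ B) X ->
  \sum_(p <- Q) ncongr_pairs p X <= size X * size X * trunc_log T B.
Proof.
elim: X => [|x s IH]; first by rewrite big1.
move=> /= /andP [xs us] /andP [xB sB].
rewrite big_split /=.
have pairs_x : \sum_(p <- Q) count (fun y => x == y %[mod p]) s <= size s * trunc_log T B.
  under eq_bigr do rewrite -sum1_count big_mkcond.
  rewrite exchange_big /=.
  apply: (@leq_trans (\sum_(y <- s) trunc_log T B)).
    rewrite [leqLHS]big_seq [leqRHS]big_seq; apply: leq_sum => y ys.
    rewrite -big_mkcond sum1_count count_large_prime_congr //.
    - by apply: contraNneq xs => ->.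
    - exact: (allP sB).
  by rewrite big_const_seq count_predT iter_addn_0 mulnC.
apply: leq_trans (leq_add pairs_x (IH us sB)) _.
rewrite -mulnDl leq_mul2r; apply/orP; right; move: (size s) => k; nia.
Qed.

End LargePrimes.

Definition Rleb (x y : R) : bool := if Rle_dec x y then true else false.

Lemma RlebP x y : reflect (x <= y)%R (Rleb x y).
Proof. by rewrite /Rleb; case: Rle_dec => h; constructor. Qed.

Lemma INR_addn m n : INR (m + n) = (INR m + INR n)%R.
Proof. exact: plus_INR. Qed.

Lemma markov_count (Q : seq nat) (f : nat -> nat) (a : R) : (0 <= a)%R ->
  (INR (count (fun p => ~~ Rleb (INR (f p)) a) Q) * a <= INR (\sum_(p <- Q) f p))%R.
Proof.
move=> a0; elim: Q => [|p Q IH]; first by rewrite big_nil /=; lra.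
rewrite big_cons /= !INR_addn.
case: RlebP => [_ | /Rnot_le_lt fp_gt_a] /=.
- have := pos_INR (f p); lra.
- nra.
Qed.

Lemma INR_expn m n : INR (expn m n) = (INR m ^ n)%R.
Proof. by elim: n => [|n IH] //; rewrite expnS mult_INR IH. Qed.

Lemma ln_le x y : (0 < x)%R -> (x <= y)%R -> (ln x <= ln y)%R.
Proof. by move=> x0 /Rle_lt_or_eq_dec [/(ln_increasing _ _ x0) | ->]; lra. Qed.

Lemma ln_le_pred x : (0 < x)%R -> (ln x <= x - 1)%R.
Proof.
move=> x0; rewrite -{2}(exp_ln x x0).
have := exp_ineq1_le (ln x); lra.
Qed.

Lemma ln10_le4 : (ln 10 <= 4)%R.
Proof.
rewrite -(ln_exp 4); apply: ln_le; first lra.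
have -> : (4 = 1 + 1 + 1 + 1)%R by ring.
have e1 : (2 <= exp 1)%R by have := exp_ineq1_le 1; lra.
have e2 : (4 <= exp 1 * exp 1)%R by nra.
rewrite !exp_plus; nra.
Qed.

Section SqrtThreshold.

Variables M s : nat.
Hypotheses (M_gt0 : 0 < M) (s_sq_le : s * s <= M) (s_sq_gt : M < s.+1 * s.+1).

Let s_gt0 : 0 < s.
Proof. by case: s s_sq_gt M_gt0 => [|//]; case: M. Qed.

Let s_ge1 : (1 <= INR s)%R.
Proof. by apply: (le_INR 1); apply/leP. Qed.

Lemma ln_le_twice_ln_succ_sqrt : (ln (INR M) <= 2 * ln (INR s.+1))%R.
Proof.
rewrite S_INR.
have -> : (2 * ln (INR s + 1) = ln ((INR s + 1) * (INR s + 1)))%R.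
  rewrite ln_mult; lra.
apply: ln_le; first by apply: (lt_INR 0); apply/ltP.
by rewrite -S_INR -mult_INR; apply: le_INR; apply/leP; rewrite ltnW.
Qed.

Lemma succ_sqrt_mul_ln_le : (INR s.+1 * ln (INR M) <= 4 * INR M)%R.
Proof.
have lnM := ln_le_twice_ln_succ_sqrt.
have lnT := ln_le_pred (INR s.+1) (lt_0_INR _ (Nat.lt_0_succ s)).
have ss : (INR s * INR s <= INR M)%R by rewrite -mult_INR; apply: le_INR; apply/leP.
rewrite S_INR in lnM lnT *.
have : (ln (INR M) <= 2 * INR s)%R by lra.
move/(Rmult_le_compat_l (INR s + 1)) => /(_ ltac:(lra)); nra.
Qed.

Lemma trunc_log_sqrt_mul_ln_le :
  (INR (trunc_log s.+1 (10 ^ M)) * ln (INR M) <= 8 * INR M)%R.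
Proof.
set K := trunc_log _ _.
have T_pos : (0 < INR s.+1)%R := lt_0_INR _ (Nat.lt_0_succ s).
have powK : (INR s.+1 ^ K <= 10 ^ M)%R.
  rewrite -INR_expn -(INR_IZR_INZ 10) -pow_INR; apply: le_INR; apply/leP.
  apply: trunc_logP; rewrite ?ltnS // lt0n; apply/eqP; exact: Nat.pow_nonzero.
have KlnT : (INR K * ln (INR s.+1) <= INR M * 4)%R.
  have := ln_le _ _ (pow_lt _ K T_pos) powK.
  rewrite !ln_pow; try lra.
  have := ln10_le4; have := pos_INR M; nra.
have := ln_le_twice_ln_succ_sqrt; have := pos_INR K; nra.
Qed.

End SqrtThreshold.

Definition few_collisions (X : seq nat) (D : R) (p : nat) : bool :=
  Rleb (INR (size X - nres X p)) (INR (size X) / D).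

Lemma few_collisions_dist X D p : few_collisions X D p ->
  (Rabs (INR (nres X p) - INR (size X)) <= INR (size X) / D)%R.
Proof.
move/RlebP; rewrite -minusE minus_INR; last exact/leP/nres_le_size.
by rewrite Rabs_minus_sym Rabs_pos_eq // -minus_INR; [apply: pos_INR | apply/leP/nres_le_size].
Qed.

Lemma count_many_collisions_le (Q X : seq nat) (D : R) : (0 < D)%R ->
  (INR (count (fun p => ~~ few_collisions X D p) Q) * INR (size X)
   <= D * INR (\sum_(p <- Q) ncongr_pairs p X))%R.
Proof.
move=> D_pos; have n_div_D_ge0 : (0 <= INR (size X) / D)%R.
  by apply: Rmult_le_pos; [apply: pos_INR | apply/Rlt_le/Rinv_0_lt_compat].
have bad_sub : count (fun p => ~~ few_collisions X D p) Q
    <= count (fun p => ~~ Rleb (INR (ncongr_pairs p X)) (INR (size X) / D)) Q.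
  apply: sub_count => p; apply: contra => /RlebP pairs_le; apply/RlebP.
  apply: Rle_trans pairs_le; apply: le_INR; apply/leP.
  by rewrite leq_subLR size_le_nres_add_pairs.
have := markov_count Q (fun p => ncongr_pairs p X) _ n_div_D_ge0.
move: (le_INR _ _ (elimT leP bad_sub)).
set bad := INR (count _ Q); set bad' := INR (count _ Q).
have -> : (bad * INR (size X) = D * (bad * (INR (size X) / D)))%R by field; lra.
move=> le_bad le_bad'; apply: Rmult_le_compat_l; first lra.
by apply: Rle_trans le_bad'; apply: Rmult_le_compat_r.
Qed.

Section ManyCollisions.

Variables (N M s : nat) (X : seq nat) (D : R).
Hypotheses (M_ge2 : 2 <= M) (s_sq_le : s * s <= M) (s_sq_gt : M < s.+1 * s.+1)
  (D_ge1 : (1 <= D)%R) (X_pos : 0 < size X) (X_uniq : uniq X)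
  (X_le : all (leq^~ (10 ^ M)) X)
  (hyp : (INR M * INR (size X) * D ^ 2 <= INR (prime_pi N) * ln (INR M))%R).

Let M_gt0 : 0 < M. Proof. exact: ltnW. Qed.

Let lnM_pos : (0 < ln (INR M))%R.
Proof. by rewrite -ln_1; apply: ln_increasing; [lra | apply: (lt_INR 1); apply/ltP]. Qed.

Let n_ge1 : (1 <= INR (size X))%R.
Proof. by apply: (le_INR 1); apply/leP. Qed.

Lemma succ_sqrt_mul_le_prime_pi : (INR s.+1 * D <= 4 * INR (prime_pi N))%R.
Proof.
have T_ln := succ_sqrt_mul_ln_le _ _ M_gt0 s_sq_le s_sq_gt.
apply: (Rmult_le_reg_r (ln (INR M))) => //.
have : (D * (INR s.+1 * ln (INR M)) <= D * (4 * INR M))%R.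
  by apply: Rmult_le_compat_l; lra.
have : (INR M * D <= INR M * (INR (size X) * (D * D)))%R.
  by apply: Rmult_le_compat_l; [apply: pos_INR | nra].
have : (D ^ 2 = D * D)%R by ring.
nra.
Qed.

Lemma count_many_collisions_large_primes :
  (INR (count (fun p => ~~ few_collisions X D p)
         [seq p <- iota 0 N.+1 | prime p && (s < p)%nat]) * D
   <= 8 * INR (prime_pi N))%R.
Proof.
set Q := filter _ _.
have T_gt1 : 1 < s.+1 by rewrite ltnS lt0n; apply: contraTneq s_sq_gt => ->; rewrite -leqNgt.
have Q_uniq : uniq Q by rewrite filter_uniq ?iota_uniq.
have [Q_prime Q_large] : all prime Q /\ all (leq s.+1) Q.
  by split; apply/allP => p; rewrite mem_filter => /andP [/andP []].
have D_pos : (0 < D)%R by lra.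
have := n_ge1; have := count_many_collisions_le Q X D D_pos.
have := le_INR _ _ (elimT leP
  (sum_pairs_large_primes _ _ T_gt1 Q_uniq Q_prime Q_large _ _ X_uniq X_le)).
have K_ln := trunc_log_sqrt_mul_ln_le _ _ M_gt0 s_sq_gt.
rewrite !mult_INR; set n := INR (size X); set K := INR (trunc_log _ _) in K_ln *.
set bad := INR (count _ Q); set pairs := INR (\sum_(p <- Q) _) => pairs_le bad_le n_pos.
have bad_le' : (bad <= D * n * K)%R.
  apply: (Rmult_le_reg_r n); first lra.
  have : (D * pairs <= D * (n * n * K))%R by apply: Rmult_le_compat_l; lra.
  nra.
apply: (Rmult_le_reg_r (ln (INR M))) => //.
have : (bad * D * ln (INR M) <= D * n * K * D * ln (INR M))%R.
  by apply: Rmult_le_compat_r; [lra | apply: Rmult_le_compat_r; lra].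
have : (D * n * D * (K * ln (INR M)) <= D * n * D * (8 * INR M))%R.
  by apply: Rmult_le_compat_l; [nra | lra].
have : (INR M * n * (D * D) <= INR (prime_pi N) * ln (INR M))%R.
  by move: hyp; rewrite -Rsqr_pow2.
nra.
Qed.

End ManyCollisions.

Lemma count_andb_split T (a b : pred T) (s : seq T) :
  count (fun x => a x && b x) s + count (fun x => a x && ~~ b x) s = count a s.
Proof.
rewrite -[RHS]size_filter -(count_predC b) !count_filter.
by congr (_ + _); apply: eq_count => x; rewrite /= andbC.
Qed.

Lemma count_prime_lt n T : count (fun p => prime p && (p < T)) (iota 0 n) <= T.
Proof.
rewrite -size_filter -[leqRHS](size_iota 0 T); apply: uniq_leq_size.
  by rewrite filter_uniq ?iota_uniq.
by move=> p; rewrite mem_filter !mem_iota !add0n => /andP [/andP [_ ->]].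
Qed.

Lemma count_many_collisions_primes N M X D : 2 <= M -> (1 <= D)%R -> uniq X ->
  all (leq^~ (10 ^ M)) X ->
  (INR M * INR (size X) * D ^ 2 <= INR (prime_pi N) * ln (INR M))%R ->
  (INR (count (fun p => prime p && ~~ few_collisions X D p) (iota 0 N.+1)) * D
   <= 12 * INR (prime_pi N))%R.
Proof.
move=> M_ge2 D_ge1 X_uniq X_le hyp; have pi_ge0 := pos_INR (prime_pi N).
have [X0 | X_pos] := posnP (size X).
  rewrite (@eq_count _ _ pred0) ?count_pred0 /= ?Rmult_0_l; first lra.
  move=> p; apply/negbTE; rewrite negb_and negbK /few_collisions X0; apply/orP; right.
  by apply/RlebP; rewrite /= /Rdiv Rmult_0_l; lra.
pose s := Nat.sqrt M.
have [s_sq_le s_sq_gt] : s * s <= M /\ M < s.+1 * s.+1.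
  by have [? ?] := Nat.sqrt_spec M (Nat.le_0_l _); split; apply/leP.
have split_R : (INR (count (fun p => prime p && ~~ few_collisions X D p) (iota 0 N.+1))
    <= INR (count (fun p => prime p && (p < s.+1)%nat) (iota 0 N.+1))
       + INR (count (fun p => ~~ few_collisions X D p)
                [seq p <- iota 0 N.+1 | prime p && (s < p)%nat]))%R.
  rewrite -INR_addn; apply/le_INR/leP.
  rewrite count_filter -count_predUI (leq_trans _ (leq_addr _ _)) // sub_count // => p /=.
  by case: (prime p); case: (few_collisions X D p); case: ltnP.
have small := le_INR _ _ (elimT leP (count_prime_lt N.+1 s.+1)).
have := succ_sqrt_mul_le_prime_pi _ _ _ _ _ M_ge2 s_sq_le s_sq_gt D_ge1 X_pos hyp.
have := count_many_collisions_large_primes _ _ _ _ _ M_ge2 s_sq_gt D_ge1 X_pos X_uniq X_le hyp.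
have := Rmult_le_compat_r D _ _ ltac:(lra) split_R.
nra.
Qed.

Theorem corollary1 :
  exists C : R, (0 < C)%R /\
  exists M0 : nat,
  forall Delta : nat -> R,
    (forall K : R, exists n0 : nat, forall n : nat, (n0 <= n)%N -> (K <= Delta n)%R) ->
  exists N0 : nat,
  forall (N M : nat), (N0 <= N)%N -> (M0 <= M)%N ->
  forall X : seq nat, uniq X ->
    all (fun x => (1 <= x <= 10 ^ M)%N) X ->
    (INR M * INR (size X) * (Delta N) ^ 2 <= INR (prime_pi N) * ln (INR M))%R ->
    exists S : seq nat,
      uniq S /\
      (forall p, p \in S ->
         prime p /\ (p <= N)%N /\
         (Rabs (INR (nres X p) - INR (size X)) <= C * INR (size X) / Delta N)%R) /\
      (INR (prime_pi N) * (1 - C / Delta N) <= INR (size S))%R.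
Proof.
exists 12%R; split; first lra.
exists 2 => Delta Delta_unbounded.
have [N0 Delta_ge1] := Delta_unbounded 1%R.
exists N0 => N M /Delta_ge1 D_ge1 M_ge2 X X_uniq X_range hyp.
have D_pos : (0 < Delta N)%R by lra.
have X_le : all (leq^~ (10 ^ M)) X by apply: sub_all X_range => x /andP [].
set L := iota 0 N.+1; set good := few_collisions X (Delta N).
exists [seq p <- L | prime p && good p].
split; first by rewrite filter_uniq ?iota_uniq.
split.
  move=> p; rewrite mem_filter mem_iota => /andP [/andP [p_prime p_good] /andP [_ p_lt]].
  split=> //; split; first by rewrite -ltnS.
  apply: Rle_trans (few_collisions_dist _ _ _ p_good) _; rewrite /Rdiv.
  apply: Rmult_le_compat_r; first exact/Rlt_le/Rinv_0_lt_compat.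
  by have := pos_INR (size X); lra.
have := count_many_collisions_primes _ _ _ _ M_ge2 D_ge1 X_uniq X_le hyp.
rewrite size_filter /prime_pi -(count_andb_split _ prime good) INR_addn.
set good_count := INR (count _ L); set bad_count := INR (count _ L).
have -> : ((good_count + bad_count) * (1 - 12 / Delta N)
    = good_count + bad_count - 12 * (good_count + bad_count) / Delta N)%R by field; lra.
move=> bad_bound; have : (bad_count <= 12 * (good_count + bad_count) / Delta N)%R.
  by apply: (Rmult_le_reg_r (Delta N)) => //; rewrite /Rdiv Rmult_assoc Rinv_l; lra.
lra.
Qed.
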